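(* Let $\{\mathbb{G}_n,\ n=2,3,\ldots\}$ be a sequence of random graphs as described in the context, with $\lim_{n\to\infty}|V_n|=\infty$, satisfying: (A) for each $n$, $D_{n,k}$ has the same distribution as $D_{n,1}$ for all $k\in V_n$, and for all distinct $k,\ell\in V_n$, $(D_{n,k},D_{n,\ell})$ has the same joint distribution as $(D_{n,1},D_{n,2})$; (B) there is an $\mathbb{N}$-valued random variable $D$ with pmf $p=(p(d),\ d=0,1,\ldots)$ such that $D_{n,1}\to D$ in distribution as $n\to\infty$; (C) for each $d=0,1,\ldots$, $\lim_{n\to\infty}\mathrm{Cov}\big[\mathbf{1}[D_{n,1}=d],\mathbf{1}[D_{n,2}=d]\big]=0$. Then for every $d=0,1,\ldots$, $P_n(d)\to p(d)$ in probability as $n\to\infty$.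
   Context: All random variables are defined on a common probability space $(\Omega,\mathcal{F},\mathbb{P})$. For each $n=2,3,\ldots$, $\mathbb{G}_n$ is a random (possibly directed, self-loops allowed) graph on the deterministic finite node set $V_n=\{1,\ldots,k_n\}$ with $k_n\ge 2$, determined by $\{0,1\}$-valued edge random variables $\{\chi_n(k,\ell),\ k,\ell\in V_n\}$ ($\chi_n(k,\ell)=1$ iff there is an edge from $k$ to $\ell$). The degree of node $k$ is $D_{n,k}=\sum_{\ell\in V_n}\chi_n(k,\ell)$. For $d=0,1,\ldots$, $N_n(d)=\sum_{k\in V_n}\mathbf{1}[D_{n,k}=d]$ and $P_n(d)=N_n(d)/|V_n|$ is the fraction of nodes with degree $d$. $\mathbb{N}=\{0,1,2,\ldots\}$. *)

From HB Require Import structures.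
From mathcomp Require Import all_boot all_order all_algebra.
From mathcomp Require Import all_classical all_reals all_analysis.
Set Implicit Arguments. Unset Strict Implicit. Unset Printing Implicit Defensive.
Import Order.TTheory GRing.Theory Num.Theory.
Import numFieldNormedType.Exports.
Local Open Scope classical_set_scope.
Local Open Scope ring_scope.

(* Random graphs: for each n, node set V_n = {0, ..., kn n - 1} (node "1" of
   the paper is 0, node "2" is 1), edge indicator chi n k l : T -> bool. *)

Definition degree (T : Type) (kn : nat -> nat) (chi : nat -> nat -> nat -> T -> bool)
  (n i : nat) (w : T) : nat := (\sum_(l < kn n) chi n i l w)%N.

Definition Ncount (T : Type) (kn : nat -> nat) (chi : nat -> nat -> nat -> T -> bool)
  (n d : nat) (w : T) : nat := (\sum_(i < kn n) (degree kn chi n i w == d))%N.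

Definition Pfrac (R : realType) (T : Type) (kn : nat -> nat)
  (chi : nat -> nat -> nat -> T -> bool) (n d : nat) (w : T) : R :=
  (Ncount kn chi n d w)%:R / (kn n)%:R.

Definition cdf_nat d (T : measurableType d) (R : realType) (P : probability T R)
  (X : T -> nat) (x : R) : \bar R := P [set w | (X w)%:R <= x].

Definition cvg_in_distribution_nat d (T : measurableType d) (R : realType)
  (P : probability T R) (X_ : nat -> T -> nat) (X : T -> nat) : Prop :=
  forall x : R, {for x, continuous (cdf_nat P X)} ->
    cdf_nat P (X_ n) x @[n --> \oo] --> cdf_nat P X x.

Definition cvg_in_probability d (T : measurableType d) (R : realType)
  (P : probability T R) (Y_ : nat -> T -> R) (c : R) : Prop :=
  forall eps : R, 0 < eps ->
    P [set w | eps <= `|Y_ n w - c|] @[n --> \oo] --> 0%E.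

From HB Require Import structures.
From mathcomp Require Import all_boot all_order all_algebra.
From mathcomp Require Import all_classical all_reals all_analysis.
From mathcomp Require Import measurable_realfun ring lra.
Set Implicit Arguments.
Unset Strict Implicit.
Unset Printing Implicit Defensive.
Import Order.TTheory GRing.Theory Num.Theory.
Import numFieldNormedType.Exports.
Local Open Scope classical_set_scope.
Local Open Scope ring_scope.

(* Let A_i be the event that node i has degree d, and k = |V_n|.  Since
   P_n(d) = (1/k) sum_i 1[A_i], exchangeability (A) gives
     E[(P_n(d) - p(d))^2] = P(A_0)/k + (1 - 1/k) P(A_0 A_1) - 2 p(d) P(A_0) + p(d)^2.
   By (B), P(A_0) -> p(d), because the half-integers are continuity points of
   the cdf of D and P(D = d) is its jump between d - 1/2 and d + 1/2; by (C),
   P(A_0 A_1) - P(A_0)^2 -> 0.  With k -> oo the second moment tends to 0, and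
   Markov's inequality for (P_n(d) - p(d))^2 gives convergence in probability. *)

Lemma ler_nat_near_half (R : realFieldType) (m k : nat) (y : R) :
  `|y - (k%:R - 2^-1)| < 2^-1 -> (m%:R <= y) = (m < k)%N.
Proof.
rewrite ltr_norml => /andP[lo hi].
have [mk|km] := ltnP m k.
  have mk1 : m%:R + 1 <= k%:R :> R by rewrite natr1 ler_nat.
  by apply/idP; lra.
have kmR : k%:R <= m%:R :> R by rewrite ler_nat.
by apply/negbTE; rewrite -ltNge; lra.
Qed.

Section nat_valued_random_variable.
Context (dT : measure_display) (T : measurableType dT) (R : realType).
Context (P : probability T R).
Implicit Types (X : T -> nat) (k : nat).

Lemma cdf_nat_near_half X k (y : R) : `|y - (k%:R - 2^-1)| < 2^-1 ->
  cdf_nat P X y = P [set w | (X w < k)%N].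
Proof.
move=> yk; rewrite /cdf_nat; congr (P _); apply/seteqP.
by split => w /=; rewrite (ler_nat_near_half (X w) yk).
Qed.

Lemma cdf_nat_half X k : cdf_nat P X (k%:R - 2^-1) = P [set w | (X w < k)%N].
Proof. by apply: cdf_nat_near_half; rewrite subrr normr0 invr_gt0. Qed.

Lemma cdf_nat_continuous_half X k : {for k%:R - 2^-1, continuous (cdf_nat P X)}.
Proof.
apply: (near_cst_continuous (P [set w | (X w < k)%N])).
apply/nbhs_ballP; exists 2^-1 => [|y]; first by rewrite /= invr_gt0.
by rewrite /ball /= distrC => /cdf_nat_near_half.
Qed.

Lemma measurable_nat_lt X k : (forall m, measurable [set w | X w = m]) ->
  measurable [set w | (X w < k)%N].
Proof.
move=> mX; rewrite (_ : [set w | _] = \bigcup_(m in `I_k) [set w | X w = m]).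
  exact: bigcup_measurable.
by apply/seteqP; split => [w /= ?|w [m /= mk ->]] //; exists (X w).
Qed.

Lemma prob_nat_eq X k : (forall m, measurable [set w | X w = m]) ->
  fine (P [set w | X w = k]) =
  fine (P [set w | (X w < k.+1)%N]) - fine (P [set w | (X w < k)%N]).
Proof.
move=> mX.
have -> : [set w | (X w < k.+1)%N] = [set w | (X w < k)%N] `|` [set w | X w = k].
  apply/seteqP; split => w /=; last by case=> [/ltnW|->].
  by rewrite ltnS leq_eqVlt => /orP[/eqP|]; [right|left].
have mlt := measurable_nat_lt k mX.
rewrite measureU //; last first.
  by apply/seteqP; split => w //= [+ wk]; rewrite wk ltnn.
by rewrite fineD ?fin_num_measure // [X in X - _]addrC addrK.
Qed.

Lemma cvg_in_distribution_nat_prob_eq (X_ : nat -> T -> nat) X k :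
  (\forall n \near \oo, forall m, measurable [set w | X_ n w = m]) ->
  (forall m, measurable [set w | X w = m]) ->
  cvg_in_distribution_nat P X_ X ->
  fine (P [set w | X_ n w = k]) @[n --> \oo] --> fine (P [set w | X w = k]).
Proof.
move=> mX_ mX XX.
have cvg_lt j : fine (P [set w | (X_ n w < j)%N]) @[n --> \oo] -->
                fine (P [set w | (X w < j)%N]).
  apply: fine_cvg; rewrite fineK; last exact/fin_num_measure/measurable_nat_lt.
  have := XX _ (@cdf_nat_continuous_half X j).
  by rewrite cdf_nat_half; under eq_fun do rewrite cdf_nat_half.
rewrite (prob_nat_eq k mX); apply: cvg_trans (cvgB (cvg_lt k.+1) (cvg_lt k)).
by apply: near_eq_cvg; apply: filterS mX_ => n /prob_nat_eq ->.
Qed.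

End nat_valued_random_variable.

Lemma sum_if_eq (R : nmodType) k (i : 'I_k) (a b : R) :
  \sum_(j < k) (if i == j then a else b) = a + b *+ k.-1.
Proof.
rewrite (bigD1 i) //= eqxx (eq_bigr (fun=> b)) => [|j].
  by rewrite sumr_const cardC1 card_ord.
by rewrite eq_sym => /negbTE ->.
Qed.

Lemma sqr_sum_indic (T : Type) (R : pzRingType) (I : Type) (r : seq I)
    (A : I -> set T) w :
  (\sum_(i <- r) \1_(A i) w) ^+ 2 = \sum_(i <- r) \sum_(j <- r) (\1_(A i `&` A j) w : R).
Proof.
rewrite expr2 big_distrlr /=; apply: eq_bigr => i _; apply: eq_bigr => j _.
by rewrite indicI.
Qed.

Definition empirical_freq {T : Type} {R : numFieldType} (A : nat -> set T) (k : nat)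
  (w : T) : R := (\sum_(i < k) \1_(A i) w) / k%:R.

Section events.
Context (dT : measure_display) (T : measurableType dT) (R : realType).
Context (P : probability T R).

Lemma indic_Lfun1 (A : set T) : measurable A -> (\1_A : T -> R) \in Lfun P 1.
Proof. by move=> mA; apply/Lfun1_integrable; exact: integrable_indic. Qed.

Lemma covariance_indic (A B : set T) : measurable A -> measurable B ->
  covariance P (\1_A : T -> R) \1_B = (P (A `&` B) - P A * P B)%E.
Proof.
move=> mA mB; have mAB := measurableI _ _ mA mB.
have indicAB : (\1_A * \1_B : T -> R) = \1_(A `&` B) by rewrite indicI.
by rewrite covarianceE ?indicAB ?indic_Lfun1 // !expectation_indic.
Qed.

Lemma expectation_big (I : Type) (r : seq I) (F : I -> T -> R) :
  (forall i, F i \in Lfun P 1) ->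
  ('E_P[\sum_(i <- r) F i] = \sum_(i <- r) 'E_P[F i])%E.
Proof.
move=> LF; elim: r => [|i r IH]; first by rewrite !big_nil expectation_cst.
by rewrite !big_cons expectationD ?IH // rpred_sum.
Qed.

Lemma markov_nonneg (g : T -> R) (t : R) : measurable_fun setT g ->
  (forall w, 0 <= g w) -> 0 < t ->
  (P [set w | (t <= g w)%R] <= (t^-1)%:E * 'E_P[g])%E.
Proof.
move=> mg g0 t0.
have mB : measurable [set w | t <= g w].
  have := mg measurableT _ (measurable_itv `[t, +oo[); rewrite setTI.
  by congr measurable; apply/seteqP; split => w /=; rewrite in_itv /= andbT.
rewrite lee_pdivlMl // -expectation_indic // -expectationZl ?indic_Lfun1 //.
apply: expectation_le => //.
- by apply: measurable_funM => //; exact: measurable_indic.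
- by move=> w /=; rewrite mulr_ge0 ?(ltW t0) // indicE.
apply/aeW => w /=; rewrite indicE.
by case: (boolP (w \in _)) => [/set_mem /=|_]; rewrite ?mul1r ?mul0r.
Qed.

Lemma measurable_empirical_freq (A : nat -> set T) k :
  (forall i, (i < k)%N -> measurable (A i)) ->
  measurable_fun setT (empirical_freq A k : T -> R).
Proof.
move=> mA; apply: measurable_funM; last exact: measurable_cst.
by apply: measurable_sum => i; exact/measurable_indic/mA.
Qed.

Lemma expectation_sqr_empirical_freq_sub (A : nat -> set T) k (a b c : R) :
  (0 < k)%N ->
  (forall i, (i < k)%N -> measurable (A i)) ->
  (forall i, (i < k)%N -> P (A i) = a%:E) ->
  (forall i j, (i < k)%N -> (j < k)%N -> i != j -> P (A i `&` A j) = b%:E) ->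
  ('E_P[fun w => ((empirical_freq A k w - c) ^+ 2)%R] =
    (k%:R^-1 * a + (1 - k%:R^-1) * b - 2 * c * a + c ^+ 2)%:E)%E.
Proof.
move=> k0 mA PA PAB.
pose S : T -> R := \sum_(i < k) \1_(A i).
pose S2 : T -> R := \sum_(i < k) \sum_(j < k) \1_(A i `&` A j).
have mAA (i j : 'I_k) : measurable (A i `&` A j) by apply: measurableI; apply: mA.
have LS : S \in Lfun P 1 by apply: rpred_sum => i _; apply/indic_Lfun1/mA.
have LS2 : S2 \in Lfun P 1.
  by apply: rpred_sum => i _; apply: rpred_sum => j _; apply/indic_Lfun1.
have ES : ('E_P[S] = (a *+ k)%:E)%E.
  rewrite expectation_big => [|i]; last exact/indic_Lfun1/mA.
  rewrite (eq_bigr (fun=> a%:E)) => [|i _].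
    by rewrite sumEFin sumr_const card_ord.
  by rewrite expectation_indic ?PA //; exact: mA.
have ES2 : ('E_P[S2] = ((a + b *+ k.-1) *+ k)%:E)%E.
  rewrite expectation_big => [|i]; last by apply: rpred_sum => j _; apply/indic_Lfun1.
  rewrite (eq_bigr (fun=> (a + b *+ k.-1)%:E)) => [|i _].
    by rewrite sumEFin sumr_const card_ord.
  rewrite expectation_big => [|j]; last exact/indic_Lfun1.
  rewrite (eq_bigr (fun j => (if i == j then a else b)%:E)) => [|j _].
    by rewrite sumEFin sum_if_eq.
  rewrite expectation_indic //; have [<-|ij] := eqVneq i j; first by rewrite setIid PA.
  exact: PAB.
have sqrE : (fun w => (empirical_freq A k w - c) ^+ 2) =
    (k%:R ^- 2) \o* S2 \+ (- (2 * c / k%:R)) \o* S \+ cst (c ^+ 2).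
  apply/funext => w; rewrite /empirical_freq /S /S2 /= !fct_sumE.
  under [in RHS]eq_bigr do rewrite fct_sumE.
  rewrite -sqr_sum_indic.
  by field; rewrite pnatr_eq0 -lt0n.
rewrite sqrE expectationD ?rpredD ?Lfun_scale ?Lfun_cst //.
rewrite expectationD ?Lfun_scale // expectation_cst.
rewrite (expectationZl _ LS2) (expectationZl _ LS) ES ES2 -!EFinM -!EFinD.
have kE : k.-1%:R = k%:R - 1 :> R by rewrite -[in RHS](prednK k0) -natr1 addrK.
rewrite -[(_ + _) *+ k]mulr_natr -[a *+ k]mulr_natr -[b *+ _]mulr_natr kE.
congr EFin.
by field; rewrite pnatr_eq0 -lt0n.
Qed.

Lemma cvg_in_probability_mean_square (Y_ : nat -> T -> R) (c : R) :
  (\forall n \near \oo, measurable_fun setT (Y_ n)) ->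
  ('E_P[fun w => ((Y_ n w - c) ^+ 2)%R] @[n --> \oo] --> 0)%E ->
  cvg_in_probability P Y_ c.
Proof.
move=> mY EY0 eps eps0.
have eps2 : 0 < eps ^+ 2 by rewrite exprn_gt0.
have sqr_mono (x : R) : (eps <= `|x|) = (eps ^+ 2 <= x ^+ 2).
  by rewrite -(real_normK (num_real x)) ler_sqr // nnegrE ltW.
apply: (@squeeze_cvge _ _ _ _ (cst 0%E) _
  (fun n => ((eps ^+ 2)^-1)%:E * 'E_P[fun w => ((Y_ n w - c) ^+ 2)%R])%E).
- apply: filterS mY => n mYn; rewrite measure_ge0 /=.
  rewrite (_ : [set w | _] = [set w | eps ^+ 2 <= (Y_ n w - c) ^+ 2]).
    apply: markov_nonneg => // [|w]; last exact: sqr_ge0.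
    by apply: measurable_funX; apply: measurable_funB.
  by apply/seteqP; split => w /=; rewrite sqr_mono.
- exact: cvg_cst.
- by rewrite -(mule0 ((eps ^+ 2)^-1)%:E); apply: cvgeZl.
Qed.

End events.

Lemma exchangeable_mean_square_cvg0 (R : realFieldType) (ki a b : nat -> R) (c : R) :
  ki n @[n --> \oo] --> 0 -> a n @[n --> \oo] --> c ->
  b n - a n ^+ 2 @[n --> \oo] --> 0 ->
  ki n * a n + (1 - ki n) * b n - 2 * c * a n + c ^+ 2 @[n --> \oo] --> 0.
Proof.
move=> ki0 ac ab0.
have bc : b n @[n --> \oo] --> c ^+ 2.
  rewrite -[c ^+ 2]add0r expr2; apply: cvg_trans (cvgD ab0 (cvgM ac ac)).
  by apply: near_eq_cvg; apply: nearW => n /=; rewrite subrK.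
rewrite (_ : 0 = 0 * c + (1 - 0) * c ^+ 2 - 2 * c * c + c ^+ 2); last by ring.
apply: cvgD; last exact: cvg_cst.
apply: cvgB; last by apply: cvgM => //; exact: cvg_cst.
apply: cvgD; first exact: cvgM.
by apply: cvgM => //; apply: cvgB => //; exact: cvg_cst.
Qed.

Lemma natr_eq_indic (T : Type) (R : pzRingType) (X : T -> nat) d w :
  ((X w == d)%:R : R) = \1_[set w | X w = d] w.
Proof.
rewrite indicE; have [Xd|Xd] := eqVneq (X w) d; first by rewrite mem_set.
by rewrite memNset //; apply/eqP.
Qed.

(* The offset [e] makes the statement amenable to induction on [m]. *)
Lemma measurable_count_eq (dT : measure_display) (T : measurableType dT)
    (f : nat -> T -> bool) m :
  (forall l, (l < m)%N -> measurable [set w | f l w]) ->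
  forall e d, measurable [set w | (\sum_(l < m) f l w + e)%N = d].
Proof.
elim: m => [|m IH] mf e d.
  under eq_set do rewrite big_ord0 add0n.
  have [<-|ed] := eqVneq e d; first by rewrite (_ : [set _ | _] = setT) //; apply/seteqP.
  rewrite (_ : [set _ | _] = set0) //.
  by apply/seteqP; split => // w /eqP; rewrite (negbTE ed).
have mfm : measurable [set w | f m w] by exact: mf.
have IH' := IH (fun l lm => mf l (ltnW lm)).
rewrite (_ : [set w | _] =
  ([set w | f m w] `&` [set w | (\sum_(l < m) f l w + e.+1)%N = d]) `|`
  (~` [set w | f m w] `&` [set w | (\sum_(l < m) f l w + e)%N = d])).
  by apply: measurableU; apply: measurableI => //; exact: measurableC.
apply/seteqP; split => w /=; rewrite big_ord_recr /= -addnA; case: (f m w) => //=.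
- by move=> ?; left.
- by move=> ?; right.
- by case=> [[]|[]].
- by case=> [[]|[]].
Qed.

Section random_graph.
Context (dT : measure_display) (T : measurableType dT).
Context (kn : nat -> nat) (chi : nat -> nat -> nat -> T -> bool).

Lemma measurable_degree_eq n i d :
  (forall l, (l < kn n)%N -> measurable [set w | chi n i l w]) ->
  measurable [set w | degree kn chi n i w = d].
Proof.
by move=> mchi; have := measurable_count_eq mchi 0 d; under eq_set do rewrite addn0.
Qed.

Lemma Pfrac_empirical_freq (R : realType) n d :
  Pfrac R kn chi n d = empirical_freq (fun i => [set w | degree kn chi n i w = d]) (kn n).
Proof.
apply/funext => w; rewrite /Pfrac /Ncount natr_sum; congr (_ / _).
by apply: eq_bigr => i _; rewrite natr_eq_indic.
Qed.

End random_graph.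

Theorem proposition2 (dT : measure_display) (T : measurableType dT)
  (R : realType) (P : probability T R)
  (kn : nat -> nat) (chi : nat -> nat -> nat -> T -> bool) (D : T -> nat)
  (* graph setup: k_n >= 2, edge variables are {0,1}-valued random variables *)
  (Hkn : forall n, (2 <= n)%N -> (2 <= kn n)%N)
  (Hchi : forall n i l, (2 <= n)%N -> (i < kn n)%N -> (l < kn n)%N ->
     measurable [set w | chi n i l w])
  (* D is an N-valued random variable *)
  (HD : forall d, measurable [set w | D w = d])
  (* |V_n| -> oo *)
  (Hinf : ((kn n)%:R : R) @[n --> \oo] --> +oo)
  (* (A) *)
  (HA1 : forall n, (2 <= n)%N -> forall i, (i < kn n)%N -> forall d,
     P [set w | degree kn chi n i w = d] = P [set w | degree kn chi n 0 w = d])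
  (HA2 : forall n, (2 <= n)%N -> forall i j, (i < kn n)%N -> (j < kn n)%N ->
     i <> j -> forall d1 d2,
     P [set w | degree kn chi n i w = d1 /\ degree kn chi n j w = d2] =
     P [set w | degree kn chi n 0 w = d1 /\ degree kn chi n 1 w = d2])
  (* (B) *)
  (HB : cvg_in_distribution_nat P (fun n => degree kn chi n 0) D)
  (* (C) *)
  (HC : forall d : nat,
     covariance P (fun w => ((degree kn chi n 0 w == d)%:R : R))
                  (fun w => ((degree kn chi n 1 w == d)%:R : R)) @[n --> \oo]
       --> 0%E) :
  forall d : nat,
    cvg_in_probability P (fun n => Pfrac R kn chi n d)
      (fine (P [set w | D w = d])).
Proof.
move=> d; set c := fine (P [set w | D w = d]).
pose A n i := [set w | degree kn chi n i w = d].
pose a n := fine (P (A n 0%N)).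
pose b n := fine (P (A n 0%N `&` A n 1%N)).
have large : \forall n \near \oo, (2 <= n)%N /\ (1 < kn n)%N.
  by apply: filterS (nbhs_infty_ge 2) => n n2; split; last exact: Hkn.
have mdeg n i e : (2 <= n)%N -> (i < kn n)%N ->
    measurable [set w | degree kn chi n i w = e].
  by move=> n2 ikn; apply: measurable_degree_eq => l; exact: Hchi.
have mA n i : (2 <= n)%N -> (i < kn n)%N -> measurable (A n i) by exact: mdeg.
have PA n i : (2 <= n)%N -> (i < kn n)%N -> P (A n i) = (a n)%:E.
  move=> n2 ikn; rewrite /A HA1 // fineK // fin_num_measure //.
  by apply: mA => //; apply: leq_trans (Hkn _ n2).
have PAA n i j : (2 <= n)%N -> (i < kn n)%N -> (j < kn n)%N -> i != j ->
    P (A n i `&` A n j) = (b n)%:E.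
  move=> n2 ikn jkn /eqP ij; rewrite [LHS]HA2 // fineK // fin_num_measure //.
  by apply: measurableI; apply: mA => //; apply: leq_trans (Hkn _ n2).
have indic_degree n i : (fun w => ((degree kn chi n i w == d)%:R : R)) = \1_(A n i).
  by apply/funext => w; rewrite natr_eq_indic.
have a_cvg : a n @[n --> \oo] --> c.
  apply: cvg_in_distribution_nat_prob_eq HD HB.
  by apply: filterS large => n [n2 kn1] m; apply: mdeg => //; exact: ltnW.
have ab_cvg : b n - a n ^+ 2 @[n --> \oo] --> 0.
  apply: cvg_trans (fine_cvg (HC d)); apply: near_eq_cvg.
  apply: filterS large => n [n2 kn1] /=.
  rewrite !indic_degree.
  have mA0 := mA n 0%N n2 (ltnW kn1); have mA1 := mA n 1%N n2 kn1.
  by rewrite covariance_indic // PAA ?PA ?(ltnW kn1) //= expr2.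
have ki_cvg : ((kn n)%:R : R)^-1 @[n --> \oo] --> 0.
  apply/gtr0_cvgV0 => //; apply: filterS large => n [_ kn1]; rewrite ltr0n; exact: ltnW.
have Emoment : \forall n \near \oo, ('E_P[fun w => ((Pfrac R kn chi n d w - c) ^+ 2)%R] =
    ((kn n)%:R^-1 * a n + (1 - (kn n)%:R^-1) * b n - 2 * c * a n + c ^+ 2)%:E)%E.
  apply: filterS large => n [n2 kn1]; rewrite Pfrac_empirical_freq.
  apply: expectation_sqr_empirical_freq_sub => [|i|i|i j]; first exact: ltnW.
  - exact: mA.
  - exact: PA.
  - exact: PAA.
apply: cvg_in_probability_mean_square.
  apply: filterS large => n [n2 _]; rewrite Pfrac_empirical_freq.
  by apply: measurable_empirical_freq => i; exact: mA.
apply/fine_cvgP; split; first by apply: filterS Emoment => n ->.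
apply: cvg_trans (exchangeable_mean_square_cvg0 ki_cvg a_cvg ab_cvg).
by apply: near_eq_cvg; apply: filterS Emoment => n /= ->.
Qed.
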